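(* Let $\mathbb{K}$ be a totally ordered field which is Cantor complete but not algebraically saturated. Then (i) $\mathbb{K}$ has a strictly increasing unbounded sequence; (ii) $\mathbb{K}$ is sequentially complete.
   Context: Cantor complete: every countable family of closed bounded intervals in $\mathbb{K}$ with the finite intersection property has non-empty intersection. Algebraically saturated: every countable family of open intervals in $\mathbb{K}$ with the finite intersection property has non-empty intersection. Sequentially complete: every Cauchy sequence converges in the order topology, where $(a_n)$ is Cauchy if for every $\epsilon\in\mathbb{K}$, $\epsilon>0$, there is $N$ with $|a_n-a_m|<\epsilon$ for $n,m\ge N$. *)

(* A totally ordered field is a realFieldType. *)
From HB Require Import structures.
From mathcomp Require Import all_boot all_order all_algebra.
Set Implicit Arguments. Unset Strict Implicit. Unset Printing Implicit Defensive.
Import Order.TTheory GRing.Theory Num.Theory.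
Local Open Scope ring_scope.

(* A countable family of sets indexed by nat (finite families are covered by repetition). *)
Definition fip (K : realFieldType) (A : nat -> K -> Prop) : Prop :=
  forall s : seq nat, exists x : K, forall i, i \in s -> A i x.

Definition closed_itv (K : realFieldType) (a b : K) : K -> Prop :=
  fun x => a <= x /\ x <= b.

Definition open_itv (K : realFieldType) (a b : K) : K -> Prop :=
  fun x => a < x /\ x < b.

Definition cantor_complete (K : realFieldType) : Prop :=
  forall a b : nat -> K, (forall n, a n <= b n) ->
    fip (fun n => closed_itv (a n) (b n)) ->
    exists x : K, forall n, closed_itv (a n) (b n) x.

Definition algebraically_saturated (K : realFieldType) : Prop :=
  forall a b : nat -> K,
    fip (fun n => open_itv (a n) (b n)) ->
    exists x : K, forall n, open_itv (a n) (b n) x.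

Definition cauchy (K : realFieldType) (u : nat -> K) : Prop :=
  forall eps : K, 0 < eps -> exists N : nat,
    forall n m, (N <= n)%N -> (N <= m)%N -> `|u n - u m| < eps.

Definition converges_to (K : realFieldType) (u : nat -> K) (l : K) : Prop :=
  forall eps : K, 0 < eps -> exists N : nat, forall n, (N <= n)%N -> `|u n - l| < eps.

Definition sequentially_complete (K : realFieldType) : Prop :=
  forall u : nat -> K, cauchy u -> exists l : K, converges_to u l.

From HB Require Import structures.
From mathcomp Require Import all_boot all_order all_algebra.
From Stdlib Require Import Classical ClassicalEpsilon.
Set Implicit Arguments. Unset Strict Implicit. Unset Printing Implicit Defensive.
Import Order.TTheory GRing.Theory Num.Theory.
Local Open Scope ring_scope.

(* Non-saturation yields a countable family of open intervals with the finite
   intersection property and no common point; after making it nested, Cantor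
   completeness gives a point x of all the closed intervals, which must then be
   an endpoint, say x = B k.  The distances x - A n are positive and get below
   every positive element: otherwise x - eps would be a common point.  Such a
   sequence d makes the field sequentially complete (Cantor completeness on the
   intervals of radius d k around a Cauchy sequence), and the partial sums of
   its reciprocals are strictly increasing and unbounded. *)

Lemma fipP (K : realFieldType) (A : nat -> K -> Prop) :
  fip A <-> forall N, exists x, forall i, (i <= N)%N -> A i x.
Proof.
split=> [fipA N | finA s].
  have [x Hx] := fipA (iota 0 N.+1).
  by exists x => i iN; apply: Hx; rewrite mem_iota add0n ltnS.
have [N sN] : exists N, forall i, i \in s -> (i <= N)%N.
  elim: s {finA} => [|j s [N sN]]; first by exists 0%N.
  exists (maxn j N) => i; rewrite inE => /predU1P[-> | /sN iN].
    exact: leq_maxl.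
  exact: leq_trans iN (leq_maxr _ _).
have [x Hx] := finA N.
by exists x => i /sN; apply: Hx.
Qed.

Section PrefixMax.
Variables (disp : Order.disp_t) (T : orderType disp).

Fixpoint prefix_max (a : nat -> T) (n : nat) : T :=
  if n is m.+1 then Order.max (prefix_max a m) (a n) else a 0%N.

Lemma prefix_max_ge a n k : (k <= n)%N -> (a k <= prefix_max a n)%O.
Proof.
elim: n k => [|n IH] k; first by rewrite leqn0 => /eqP ->.
rewrite leq_eqVlt => /predU1P[-> |]; rewrite /= le_max.
  by rewrite lexx orbT.
by rewrite ltnS => /IH ->.
Qed.

Lemma prefix_max_attained a n : exists2 k, (k <= n)%N & prefix_max a n = a k.
Proof.
elim: n => [|n [k kn IH]]; first by exists 0%N.
rewrite /= IH /Order.max; case: ifP => _; first by exists n.+1.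
by exists k => //; apply: leqW.
Qed.

Lemma prefix_max_mono a : {homo prefix_max a : n m / (n <= m)%N >-> (n <= m)%O}.
Proof.
move=> n m nm; have [k kn ->] := prefix_max_attained a n.
exact/prefix_max_ge/(leq_trans kn).
Qed.

End PrefixMax.

Section CantorComplete.
Variable K : realFieldType.

Definition pos_null_seq (d : nat -> K) :=
  (forall n, 0 < d n) /\ forall eps, 0 < eps -> exists n, d n <= eps.

Lemma closed_itv_distE (c e x : K) : closed_itv (c - e) (c + e) x <-> `|x - c| <= e.
Proof. by rewrite ler_distl; split => [[-> ->] | /andP[]]. Qed.

Lemma pos_null_seq_gap (A B : nat -> K) (x : K) :
  (forall n, A n < x) -> (forall n, x <= B n) ->
  ~ (exists y, forall n, open_itv (A n) (B n) y) ->
  pos_null_seq (fun n => x - A n).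
Proof.
move=> Ax xB nogap; split=> [n | eps eps0]; first by rewrite subr_gt0.
apply: NNPP => small; apply: nogap; exists (x - eps) => n; split.
  by rewrite ltrBrDl -ltrBrDr ltNge; apply/negP => le_eps; apply: small; exists n.
by apply: lt_le_trans (xB n); rewrite ltrBlDr ltrDl.
Qed.

Lemma prefix_max_lt_prefix_min (a b : nat -> K) :
  fip (fun n => open_itv (a n) (b n)) ->
  forall n m, prefix_max a n < - prefix_max (fun k => - b k) m.
Proof.
move=> /fipP fipab n m; pose N := maxn n m; have [x Hx] := fipab N.
apply: (@le_lt_trans _ _ (prefix_max a N)); first by apply: prefix_max_mono; apply: leq_maxl.
apply: (@lt_le_trans _ _ (- prefix_max (fun k => - b k) N)); last first.
  by rewrite lerN2; apply: prefix_max_mono; apply: leq_maxr.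
have [k kN ->] := prefix_max_attained a N.
have [j jN ->] := prefix_max_attained (fun k => - b k) N.
rewrite opprK; have [ax _] := Hx k kN; have [_ xb] := Hx j jN.
exact: lt_trans ax xb.
Qed.

Lemma pos_null_seq_of_cantor_unsaturated :
  cantor_complete K -> ~ algebraically_saturated K -> exists d, pos_null_seq d.
Proof.
move=> cc nsat.
have [a /not_all_ex_not[b Hb]] := not_all_ex_not _ _ nsat.
have {Hb}[fipab nocommon] := imply_to_and _ _ Hb.
pose A := prefix_max a; pose B n := - prefix_max (fun k => - b k) n.
have AB : forall n m, A n < B m := prefix_max_lt_prefix_min fipab.
have aA n : a n <= A n by apply: prefix_max_ge.
have Bb n : B n <= b n by rewrite lerNl; apply: (prefix_max_ge (fun k => - b k)).
have nogap : ~ exists y, forall n, open_itv (A n) (B n) y.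
  move=> [y Hy]; apply: nocommon; exists y => n; have [Ay yB] := Hy n.
  by split; [apply: le_lt_trans (aA n) Ay | apply: lt_le_trans yB (Bb n)].
have [x Hx] : exists x, forall n, closed_itv (A n) (B n) x.
  apply: cc => [n | ]; first exact: ltW.
  apply/fipP => N; exists (A N) => i iN; split; first exact: prefix_max_mono.
  apply: le_trans (ltW (AB N N)) _.
  by rewrite lerN2; apply: prefix_max_mono.
have [k [xA | xB]] : exists k, x = A k \/ x = B k.
  apply: NNPP => notend; apply: nogap; exists x => n.
  have [Ax xB] := Hx n; split; rewrite lt_neqAle ?Ax ?xB andbT;
    apply/eqP => eqx; apply: notend; exists n; [left | right] => //.
- (* the mirror image of the case [x = B k] under [y |-> - y] *)
  exists (fun n => (- x) - (- B n)); apply: (pos_null_seq_gap (B := fun n => - A n)).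
  + by move=> n; rewrite ltrN2 xA.
  + by move=> n; rewrite lerN2; case: (Hx n).
  + move=> [y Hy]; apply: nogap; exists (- y) => n; have [By yA] := Hy n.
    by split; [rewrite ltrNr | rewrite ltrNl].
- by exists (fun n => x - A n); apply: (pos_null_seq_gap (B := B)) => // n;
    [rewrite xB | case: (Hx n)].
Qed.

Lemma incr_unbounded_of_pos_null_seq (d : nat -> K) : pos_null_seq d ->
  exists u : nat -> K, (forall n, u n < u n.+1) /\ (forall M, exists n, M < u n).
Proof.
move=> [dpos dnull]; exists (fun n => \sum_(i < n.+1) (d i)^-1); split.
  by move=> n; rewrite [X in _ < X]big_ord_recr /= ltrDl invr_gt0.
move=> M; have M1_gt0 : 0 < `|M| + 1 by rewrite ltr_wpDl.
have [n dn] : exists n, d n <= (`|M| + 1)^-1 by apply: dnull; rewrite invr_gt0.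
exists n.
apply: (le_lt_trans (ler_norm M)); apply: (@lt_le_trans _ _ (`|M| + 1)).
  by rewrite ltrDl.
rewrite big_ord_recr /=; apply: ler_wpDl.
  by apply: sumr_ge0 => i _; rewrite invr_ge0 ltW.
by rewrite -[`|M| + 1]invrK lef_pV2 ?posrE ?invr_gt0.
Qed.

Lemma seq_complete_of_pos_null_seq (d : nat -> K) :
  cantor_complete K -> pos_null_seq d -> sequentially_complete K.
Proof.
move=> cc [dpos dnull] u cu.
have /choice[N HN] : forall k, exists N,
    forall n m, (N <= n)%N -> (N <= m)%N -> `|u n - u m| < d k.
  by move=> k; apply: cu.
have [l Hl] : exists l, forall k, closed_itv (u (N k) - d k) (u (N k) + d k) l.
  apply: cc => [k | ]; first by rewrite lerD2l (le_trans _ (ltW (dpos k))) // oppr_le0 ltW.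
  apply/fipP => M; exists (u (\max_(i < M.+1) N i)%N) => i iM.
  apply/closed_itv_distE/ltW/HN => //.
  by rewrite -ltnS in iM; apply: (@leq_bigmax _ (fun j : 'I_M.+1 => N j) (Ordinal iM)).
exists l => eps eps0; have [k dk] := dnull _ (divr_gt0 eps0 (ltr0Sn K 1)).
exists (N k) => n Nn; apply: le_lt_trans (ler_distD (u (N k)) _ _) _.
rewrite [eps]splitr; apply: ltr_leD; first exact: lt_le_trans (HN _ _ _ Nn _) dk.
by rewrite distrC; apply/(le_trans _ dk)/closed_itv_distE.
Qed.

End CantorComplete.

Theorem mainTheorem18 (K : realFieldType) :
  cantor_complete K -> ~ algebraically_saturated K ->
  (exists u : nat -> K, (forall n, u n < u n.+1) /\ (forall M : K, exists n, M < u n))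
  /\ sequentially_complete K.
Proof.
move=> cc nsat; have [d dnull] := pos_null_seq_of_cantor_unsaturated cc nsat.
split; first exact: incr_unbounded_of_pos_null_seq dnull.
exact: seq_complete_of_pos_null_seq cc dnull.
Qed.
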